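(* There is a left proper model structure on the category $s_{inj}\mathbf{Set}$ of semi-simplicial sets in which every morphism is a cofibration, a morphism $f:X\to Y$ is a weak equivalence if and only if $\dim X=\dim Y$, and the fibrations are the morphisms with the right lifting property against all weak equivalences.
   Context: $\Delta_{inj}$ is the category of nonempty finite totally ordered sets $[k]=\{0<\cdots<k\}$ and order-preserving injections; $s_{inj}\mathbf{Set}$ is the category of functors $\Delta_{inj}^{op}\to\mathbf{Set}$. For $X\in s_{inj}\mathbf{Set}$, $\dim X\in\{0,1,2,\dots\}\cup\{\infty\}$ is the smallest $n\ge 0$ such that $X([k])=\emptyset$ for all $k>n$, or $\infty$ if no such $n$ exists. A model structure is a triple (weak equivalences, cofibrations, fibrations) with (cof, fib $\cap$ we) and (cof $\cap$ we, fib) weak factorization systems and weak equivalences satisfying two-out-of-three; left proper means pushouts of weak equivalences along cofibrations are weak equivalences. *)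

From mathcomp Require Import all_boot.
Set Implicit Arguments. Unset Strict Implicit. Unset Printing Implicit Defensive.

(* The object [k] = {0 < ... < k} is represented by k : nat, with underlying set 'I_k.+1.
   A morphism [m] -> [n] is an order-preserving injection, i.e. a strictly increasing map. *)
Definition incr (m n : nat) (f : {ffun 'I_m.+1 -> 'I_n.+1}) : bool :=
  [forall i : 'I_m.+1, forall j : 'I_m.+1, (i < j) ==> (f i < f j)].

Definition Dinj (m n : nat) := {f : {ffun 'I_m.+1 -> 'I_n.+1} | incr f}.

Lemma incr_id n : incr ([ffun i => i] : {ffun 'I_n.+1 -> 'I_n.+1}).
Proof. by apply/forallP=> i; apply/forallP=> j; rewrite !ffunE; apply/implyP. Qed.

Definition Dinj_id (n : nat) : Dinj n n := exist _ [ffun i => i] (incr_id n).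

Lemma incr_comp m n p (g : Dinj n p) (f : Dinj m n) :
  incr ([ffun i => (val g) ((val f) i)] : {ffun 'I_m.+1 -> 'I_p.+1}).
Proof.
case: g => g /= Hg; case: f => f /= Hf.
apply/forallP=> i; apply/forallP=> j; rewrite !ffunE; apply/implyP=> Hij.
have := forallP (forallP Hf i) j; move/implyP/(_ Hij) => H1.
exact: (implyP (forallP (forallP Hg (f i)) (f j)) H1).
Qed.

Definition Dinj_comp m n p (g : Dinj n p) (f : Dinj m n) : Dinj m p :=
  exist _ [ffun i => (val g) ((val f) i)] (incr_comp g f).

Unset Implicit Arguments.
Record ssSet := SsSet {
  ss_obj :> nat -> Type;
  ss_act : forall m n, Dinj m n -> ss_obj n -> ss_obj m;
  ss_act_id : forall n (x : ss_obj n), ss_act n n (Dinj_id n) x = x;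
  ss_act_comp : forall m n p (g : Dinj n p) (f : Dinj m n) (x : ss_obj p),
      ss_act m p (Dinj_comp g f) x = ss_act m n f (ss_act n p g x)
}.

Record ssHom (X Y : ssSet) := SsHom {
  hom_fun :> forall n, X n -> Y n;
  hom_nat : forall m n (f : Dinj m n) (x : X n),
      hom_fun m (ss_act X m n f x) = ss_act Y m n f (hom_fun n x)
}.

Set Implicit Arguments.
Arguments ss_act s [m n] _ _.
Arguments hom_fun [X Y] s n _.
Arguments hom_nat [X Y] s [m n] f x.

Definition ssId (X : ssSet) : ssHom X X := @SsHom X X (fun n x => x) (fun m n f x => erefl).

Lemma ssComp_nat (X Y Z : ssSet) (g : ssHom Y Z) (f : ssHom X Y) m n (a : Dinj m n) (x : X n) :
  g m (f m (@ss_act X m n a x)) = @ss_act Z m n a (g n (f n x)).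
Proof. by rewrite hom_nat hom_nat. Qed.

Definition ssComp (X Y Z : ssSet) (g : ssHom Y Z) (f : ssHom X Y) : ssHom X Z :=
  @SsHom X Z (fun n x => g n (f n x)) (ssComp_nat g f).

Definition homEq (X Y : ssSet) (f g : ssHom X Y) : Prop := forall n (x : X n), f n x = g n x.

Definition MorClass := forall X Y : ssSet, ssHom X Y -> Prop.

Definition allMor : MorClass := fun _ _ _ => True.
Definition capMor (P Q : MorClass) : MorClass := fun X Y f => P X Y f /\ Q X Y f.

Definition Lifts (A B X Y : ssSet) (i : ssHom A B) (p : ssHom X Y) : Prop :=
  forall (u : ssHom A X) (v : ssHom B Y), homEq (ssComp p u) (ssComp v i) ->
    exists h : ssHom B X, homEq (ssComp h i) u /\ homEq (ssComp p h) v.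

Definition LLP (R : MorClass) : MorClass :=
  fun A B i => forall X Y (p : ssHom X Y), R X Y p -> Lifts i p.
Definition RLP (L : MorClass) : MorClass :=
  fun X Y p => forall A B (i : ssHom A B), L A B i -> Lifts i p.

Definition WFS (L R : MorClass) : Prop :=
  (forall X Y (f : ssHom X Y), exists (Z : ssSet) (l : ssHom X Z) (r : ssHom Z Y),
      L X Z l /\ R Z Y r /\ homEq (ssComp r l) f) /\
  (forall X Y (f : ssHom X Y), L X Y f <-> @LLP R X Y f) /\
  (forall X Y (f : ssHom X Y), R X Y f <-> @RLP L X Y f).

Definition TwoOutOfThree (W : MorClass) : Prop :=
  forall (X Y Z : ssSet) (f : ssHom X Y) (g : ssHom Y Z),
    (W X Y f -> W Y Z g -> W X Z (ssComp g f)) /\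
    (W X Y f -> W X Z (ssComp g f) -> W Y Z g) /\
    (W Y Z g -> W X Z (ssComp g f) -> W X Y f).

Definition ModelStructure (W C F : MorClass) : Prop :=
  WFS C (capMor F W) /\ WFS (capMor C W) F /\ TwoOutOfThree W.

Definition IsPushout (A B C D : ssSet) (i : ssHom A B) (w : ssHom A C)
    (j : ssHom C D) (k : ssHom B D) : Prop :=
  homEq (ssComp k i) (ssComp j w) /\
  forall (Z : ssSet) (b : ssHom B Z) (c : ssHom C Z),
    homEq (ssComp b i) (ssComp c w) ->
    exists u : ssHom D Z,
      homEq (ssComp u k) b /\ homEq (ssComp u j) c /\
      forall u' : ssHom D Z, homEq (ssComp u' k) b -> homEq (ssComp u' j) c -> homEq u u'.

Definition LeftProper (W C : MorClass) : Prop :=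
  forall (A B C' D : ssSet) (i : ssHom A B) (w : ssHom A C') (j : ssHom C' D) (k : ssHom B D),
    C A B i -> W A C' w -> IsPushout i w j k -> W B D k.

Definition dimBound (X : ssSet) (n : nat) : Prop := forall k, n < k -> X k -> False.

(* dim X = d, where None stands for infinity *)
Definition dim_is (X : ssSet) (d : option nat) : Prop :=
  match d with
  | Some n => dimBound X n /\ (forall m, dimBound X m -> n <= m)
  | None => forall n, ~ dimBound X n
  end.

Definition sameDim (X Y : ssSet) : Prop := exists d, dim_is X d /\ dim_is Y d.

Definition dimWE : MorClass := fun X Y _ => sameDim X Y.

From mathcomp Require Import all_boot.
From Stdlib Require Import Classical ProofIrrelevance Wf_nat.

(* Only the set of dimension bounds of a semi-simplicial set
   matters: write  dimLe A X  when every bound of X bounds A ("dim A <= dim X");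
   then dim X = dim Y iff dimLe holds both ways, and any map X -> Y gives
   dimLe X Y.  The degrees k with  k <= dim X  form a downward closed set, and
   A lives in those degrees exactly when dimLe A X.  For a downward closed set
   of degrees P, the truncation  Trunc Y P  of Y is a sub-object of Y, and a map
   into Y from anything supported on P corestricts to Trunc Y P.  Hence:
   - (cofibrations, trivial fibrations): trivial fibrations are isomorphisms,
     and every f factors as  id o f;
   - (trivial cofibrations, fibrations): f : X -> Y factors as
     X -> TruncDim X Y -> Y through the part of Y in degrees <= dim X, the
     second map lifting against every weak equivalence;
   - two-out-of-three holds since "same dimension" is an equivalence relation;
   - left properness: a pushout D of B <- A -> C maps to TruncDim B D. *)

Set Implicit Arguments. Unset Strict Implicit. Unset Printing Implicit Defensive.

(* A morphism [m] -> [n] of Delta_inj is injective, so  m <= n. *)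
Lemma Dinj_le m n (a : Dinj m n) : m <= n.
Proof.
case: a => f /= incr_f.
have incr_ij (i j : 'I_m.+1) : i < j -> f i < f j.
  by move=> lt_ij; exact: (implyP (forallP (forallP incr_f i) j) lt_ij).
have f_inj : injective f.
  move=> i j fij; apply: val_inj => /=.
  case: (ltngtP i j) => // [/incr_ij | /incr_ij]; by rewrite fij ltnn.
by have := leq_card _ f_inj; rewrite !card_ord.
Qed.

Definition dimLe (A X : ssSet) : Prop := forall n, dimBound X n -> dimBound A n.

Lemma dimLe_trans A B C : dimLe A B -> dimLe B C -> dimLe A C.
Proof. by move=> AB BC n /BC /AB. Qed.

Lemma hom_dimLe X Y (f : ssHom X Y) : dimLe X Y.
Proof. by move=> n boundY k lt_nk x; exact: boundY k lt_nk (f k x). Qed.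

Lemma dimBound_mono X n m : dimBound X n -> n <= m -> dimBound X m.
Proof. by move=> boundX le_nm k lt_mk; apply: boundX; exact: leq_ltn_trans lt_mk. Qed.

Lemma dim_exists X : exists d, dim_is X d.
Proof.
case: (classic (exists n, dimBound X n)) => [bounded | unbounded].
- have [n [[boundn least] _]] := dec_inh_nat_subset_has_unique_least_element
     (dimBound X) (fun n => classic _) bounded.
  by exists (Some n); split => // m /least /leP.
- by exists None => n boundn; apply: unbounded; exists n.
Qed.

Lemma sameDimP X Y : sameDim X Y <-> dimLe X Y /\ dimLe Y X.
Proof.
split.
- case=> [[n|] [dimX dimY]].
  + case: dimX dimY => [boundX leastX] [boundY leastY].
    split=> m boundm; apply: dimBound_mono.
    * exact: boundX.
    * exact: leastY.
    * exact: boundY.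
    * exact: leastX.
  + by split=> m boundm; [case: (dimY m boundm) | case: (dimX m boundm)].
- case=> XY YX; have [d dimX] := dim_exists X; exists d; split => //.
  case: d dimX => [n [boundX leastX]|unboundX] /=.
  + by split=> [|m /XY]; [exact: YX | exact: leastX].
  + by move=> n /XY; exact: unboundX.
Qed.

Lemma sameDim_refl X : sameDim X X.
Proof. by apply/sameDimP; split=> n. Qed.

Lemma sameDim_sym X Y : sameDim X Y -> sameDim Y X.
Proof. by move=> /sameDimP [XY YX]; apply/sameDimP. Qed.

Lemma sameDim_trans X Y Z : sameDim X Y -> sameDim Y Z -> sameDim X Z.
Proof.
move=> /sameDimP [XY YX] /sameDimP [YZ ZY]; apply/sameDimP.
by split; apply: dimLe_trans; eassumption.
Qed.

Lemma homs_sameDim X Y (f : ssHom X Y) (g : ssHom Y X) : sameDim X Y.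
Proof. by apply/sameDimP; split; [exact: hom_dimLe f | exact: hom_dimLe g]. Qed.

Definition Supported (P : nat -> Prop) (A : ssSet) : Prop := forall k, A k -> P k.

Definition upToDim (X : ssSet) (k : nat) : Prop := forall n, dimBound X n -> k <= n.

Lemma upToDim_down X m n : m <= n -> upToDim X n -> upToDim X m.
Proof. by move=> le_mn upn b boundb; exact: leq_trans le_mn (upn b boundb). Qed.

Lemma supported_upToDim A X : Supported (upToDim X) A <-> dimLe A X.
Proof.
split=> [suppA n boundX k lt_nk a | AX k a n /AX boundA].
- by have := suppA k a n boundX; rewrite leqNgt lt_nk.
- by rewrite leqNgt; apply/negP => lt_nk; exact: boundA k lt_nk a.
Qed.

Section Truncation.
Variables (Y : ssSet) (P : nat -> Prop).
Hypothesis P_down : forall m n, m <= n -> P n -> P m.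

Definition trunc_act m n (a : Dinj m n) (y : {_ : Y n | P n}) : {_ : Y m | P m} :=
  exist _ (ss_act Y a (proj1_sig y)) (P_down (Dinj_le a) (proj2_sig y)).

Lemma trunc_act_id n (y : {_ : Y n | P n}) : trunc_act (Dinj_id n) y = y.
Proof. by case: y => y py; apply: subset_eq_compat; exact: ss_act_id. Qed.

Lemma trunc_act_comp m n p (g : Dinj n p) (f : Dinj m n) (y : {_ : Y p | P p}) :
  trunc_act (Dinj_comp g f) y = trunc_act f (trunc_act g y).
Proof. by case: y => y py; apply: subset_eq_compat; exact: ss_act_comp. Qed.

Definition Trunc : ssSet := @SsSet _ trunc_act trunc_act_id trunc_act_comp.

Definition truncIncl : ssHom Trunc Y :=
  @SsHom Trunc Y (fun n y => proj1_sig y) (fun m n f y => erefl).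

Lemma Trunc_supported : Supported P Trunc.
Proof. by move=> k [y py]. Qed.

Definition corestrict Z (f : ssHom Z Y) (suppZ : Supported P Z) : ssHom Z Trunc :=
  @SsHom Z Trunc (fun n z => exist _ (f n z) (suppZ n z))
    (fun m n a z => subset_eq_compat _ _ _ _ _ _ (hom_nat f a z)).

Lemma truncIncl_lifts A B (i : ssHom A B) :
  Supported P B -> Lifts i truncIncl.
Proof.
move=> suppB u v square; exists (corestrict v suppB); split=> n x //=.
by move: (square n x) => /=; case: (u n x) => y py /= ->; apply: subset_eq_compat.
Qed.

End Truncation.

Definition TruncDim (X Y : ssSet) : ssSet := Trunc Y (@upToDim_down X).

Definition truncToDim (X Y : ssSet) : ssHom (TruncDim X Y) Y :=
  truncIncl Y (@upToDim_down X).

Lemma upToDim_self X : Supported (upToDim X) X.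
Proof. by apply/supported_upToDim. Qed.

Definition corestrictToDim (X Y : ssSet) (f : ssHom X Y) : ssHom X (TruncDim X Y) :=
  corestrict (@upToDim_down X) f (@upToDim_self X).

Lemma TruncDim_dimLe X Y : dimLe (TruncDim X Y) X.
Proof. by apply/supported_upToDim; exact: Trunc_supported. Qed.

Lemma TruncDim_sameDim X Y (f : ssHom X Y) : sameDim X (TruncDim X Y).
Proof.
by apply/sameDimP; split; [exact: hom_dimLe (corestrictToDim f) | exact: TruncDim_dimLe].
Qed.

Lemma truncToDim_fibration X Y : RLP dimWE (truncToDim X Y).
Proof.
move=> A B i /sameDimP [_ BA] u.
have suppB : Supported (upToDim X) B.
  apply/supported_upToDim.
  exact: dimLe_trans BA (dimLe_trans (hom_dimLe u) (@TruncDim_dimLe X Y)).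
exact: truncIncl_lifts suppB u.
Qed.

Definition IsIso (X Y : ssSet) (f : ssHom X Y) : Prop :=
  exists g : ssHom Y X, homEq (ssComp g f) (ssId X) /\ homEq (ssComp f g) (ssId Y).

Lemma iso_lifts A B X Y (i : ssHom A B) (p : ssHom X Y) : IsIso p -> Lifts i p.
Proof.
case=> g [gp pg] u v square; exists (ssComp g v); split=> n x /=.
- by rewrite -[v n _]square /=; exact: gp.
- exact: pg.
Qed.

(* A map lifting against itself (square of identities) is an isomorphism. *)
Lemma self_lifts_iso X Y (f : ssHom X Y) : Lifts f f -> IsIso f.
Proof.
move=> lift; have [g [gf fg]] := lift (ssId X) (ssId Y) (fun n x => erefl).
by exists g.
Qed.

Lemma trivial_fibration_iso X Y (f : ssHom X Y) :
  capMor (RLP dimWE) dimWE f -> IsIso f.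
Proof. by case=> fib we; apply: self_lifts_iso; exact: fib. Qed.

Lemma id_trivial_fibration Y : capMor (RLP dimWE) dimWE (ssId Y).
Proof.
split; last exact: sameDim_refl.
by move=> A B i _; apply: iso_lifts; exists (ssId Y).
Qed.

Lemma cof_trivfib_WFS : WFS allMor (capMor (RLP dimWE) dimWE).
Proof.
split; [|split] => X Y f.
- by exists Y, f, (ssId Y); split; [|split; [exact: id_trivial_fibration|]].
- split=> // _ X' Y' p /trivial_fibration_iso; exact: iso_lifts.
- split=> [/trivial_fibration_iso iso_f A B i _ | lifts_f].
  + exact: iso_lifts.
  + have [g _] := self_lifts_iso (lifts_f X Y f I).
    by split; [move=> A B i _; exact: lifts_f | exact: homs_sameDim f g].
Qed.

(* (trivial cofibrations, fibrations), factoring through TruncDim X Y; an f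
   lifting against truncToDim X Y yields a map Y -> TruncDim X Y, so
   dim Y <= dim X. *)
Lemma trivcof_fib_WFS : WFS (capMor allMor dimWE) (RLP dimWE).
Proof.
split; [|split] => X Y f.
- exists (TruncDim X Y), (corestrictToDim f), (truncToDim X Y).
  by split; [split=> //; exact: TruncDim_sameDim | split; [exact: truncToDim_fibration |]].
- split=> [[_ we] X' Y' p fib | lifts_f]; first exact: fib.
  split=> //; apply/sameDimP; split; first exact: hom_dimLe f.
  have [h _] := lifts_f _ _ _ (@truncToDim_fibration X Y) (corestrictToDim f) (ssId Y)
    (fun n x => erefl).
  exact: dimLe_trans (hom_dimLe h) (@TruncDim_dimLe X Y).
- by split=> fib A B i; [case=> _ /fib | move=> we; apply: fib].
Qed.

(* Weak equivalences do not depend on the map, only on the dimensions. *)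
Lemma dimWE_2of3 : TwoOutOfThree dimWE.
Proof.
move=> X Y Z f g; rewrite /dimWE; split; [|split] => XY YZ.
- exact: sameDim_trans XY YZ.
- exact: sameDim_trans (sameDim_sym XY) YZ.
- exact: sameDim_trans YZ (sameDim_sym XY).
Qed.

(* In a pushout D of B <- A -> C with A -> C a weak equivalence, both legs
   corestrict to TruncDim B D, hence so does D, and dim D <= dim B. *)
Lemma dimWE_left_proper : LeftProper dimWE allMor.
Proof.
move=> A B C D i w j k _ /sameDimP [_ CA] [square universal].
apply/sameDimP; split; first exact: hom_dimLe k.
have suppC : Supported (upToDim B) C.
  by apply/supported_upToDim; exact: dimLe_trans CA (hom_dimLe i).
have [u _] := universal _ (corestrictToDim k) (corestrict (@upToDim_down B) j suppC)
  (fun n x => subset_eq_compat _ _ _ _ _ _ (square n x)).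
exact: dimLe_trans (hom_dimLe u) (@TruncDim_dimLe B D).
Qed.

Theorem mainTheorem16 :
  ModelStructure dimWE allMor (RLP dimWE) /\ LeftProper dimWE allMor.
Proof.
split; last exact: dimWE_left_proper.
split; first exact: cof_trivfib_WFS.
split; first exact: trivcof_fib_WFS.
exact: dimWE_2of3.
Qed.
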